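(* (i) Every invertible linear map $A:\mathcal{F}_p\to\mathcal{F}_c$ or $\mathcal{F}_c\to\mathcal{F}_p$, $f\mapsto fA$, preserves static equilibrium. Every projective duality of a statics problem can be described as the composition of a linear-map equivalence class $A_\sim=\{\lambda A:\lambda\ne0\}$ acting on the forces and an equilibrium preserving congruence of the force system, and every such composition gives a projective duality of the statics problem. (ii) Every invertible linear map $A:\mathcal{E}_p\to\mathcal{E}_c$ or $\mathcal{E}_c\to\mathcal{E}_p$, $e\mapsto eA$, preserves compatibility. Every projective duality of a kinematics problem can be described as the composition of a linear-map equivalence class acting on the velocities and a compatibility preserving congruence of the velocity system, and every such composition gives a projective duality of the kinematics problem.
   Context: Points of the real projective plane $PG(2)$ are classes of nonzero vectors of $\mathbb{R}^3$ up to nonzero scaling ($\vec p\in\mathbb{R}^2$ is $(\vec p,1)$, ideal points are $(\vec u,0)$); lines are also represented by nonzero vectors up to scaling, and $p$ lies on $l$ iff $\langle p,l\rangle=0$. A duality of $PG(2)$ maps points to lines and lines to points preserving incidence; it is given by an invertible $3\times 3$ matrix $A$ up to scaling, with points $p\mapsto$ lines $pA$ and lines $l\mapsto$ points $lA^{-T}$. Mechanical quantities (bodies in the $x,y$ plane): $\mathcal{F}_p$: coplanar force with components $F_x,F_y$ and moment $M_z$ about the origin is $f=(-F_y,F_x,M_z)$, representing its line of action. $\mathcal{F}_c$: force orthogonal to the plane with $z$-component $F_z$ and moments $M_x,M_y$ about the coordinate axes is $f=(-M_y,M_x,F_z)$, representing its point of action. $\mathcal{E}_c$: planar rigid motion with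 origin velocity $(v_x,v_y)$ and angular velocity $\omega_z$ is $e=(-v_y,v_x,\omega_z)$, representing the point of rotation. $\mathcal{E}_p$: motion with $z$-velocity $v_z$ of the origin and angular velocity components $\omega_x,\omega_y$ is $e=(-\omega_y,\omega_x,v_z)$, representing the line of rotation. Static equilibrium of a force system on a body means its vectors sum to $0$. Compatibility conditions have the form $\langle l,e_j-e_k\rangle=0$ (line $l$, in $\mathcal{E}_c$) or $\langle p,e_j-e_k\rangle=0$ (point $p$, in $\mathcal{E}_p$). A congruence of a force (velocity) system $\{f_i\}$ is $\{f_i\}\mapsto\{\psi_if_i\}$ with $\psi_i\neq0$; it is equilibrium (compatibility) preserving for a problem if equilibrium (compatibility) of all (sub)bodies is preserved. A projective duality of a statics (kinematics) problem is a transformation of the mechanical quantities such that points and lines of attack of the forces (velocities) are transformed into lines and points of attack according to one projective duality of $PG(2)$, and the image is in static equilibrium (compatible) if and only if the original is. *)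

From HB Require Import structures.
From mathcomp Require Import all_boot all_order all_algebra.
From mathcomp Require Import reals.
Set Implicit Arguments. Unset Strict Implicit. Unset Printing Implicit Defensive.
Import Order.TTheory GRing.Theory Num.Theory.
Local Open Scope ring_scope.

(* Elements of PG(2) are represented by row vectors of R^3. *)
Inductive elt_kind := PointK | LineK.
Definition opp_kind (k : elt_kind) := match k with PointK => LineK | LineK => PointK end.

Inductive force_type := Fp | Fc.      (* F_p: line of action; F_c: point of action *)
Inductive vel_type := Ec | Ep.        (* E_c: point of rotation; E_p: line of rotation *)
Definition force_kind (q : force_type) := match q with Fp => LineK | Fc => PointK end.
Definition vel_kind (q : vel_type) := match q with Ec => PointK | Ep => LineK end.

Section Defs.
Variable R : realType.

Definition dot (u v : 'rV[R]_3) : R := \sum_(i < 3) u 0 i * v 0 i.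

Definition proj_eq (u v : 'rV[R]_3) : Prop := exists2 l : R, l != 0 & v = l *: u.

(* Image of an element of kind k under the duality of PG(2) given by D:
   points p |-> lines pD, lines l |-> points l D^{-T}. *)
Definition dual_img (D : 'M[R]_3) (k : elt_kind) (v : 'rV[R]_3) : 'rV[R]_3 :=
  match k with PointK => v *m D | LineK => v *m (invmx D)^T end.

(* The duality matrix D for which the action on elements of kind k is v |-> vA. *)
Definition duality_of_lin (A : 'M[R]_3) (k : elt_kind) : 'M[R]_3 :=
  match k with PointK => A | LineK => (invmx A)^T end.

Definition congr_sys (n : nat) (psi : 'I_n -> R) (f : 'I_n -> 'rV[R]_3) :=
  fun i => psi i *: f i.

(* A statics problem: n forces, m (sub)bodies; body b is acted on by the forces
   with indices in B b. *)
Definition equil (n m : nat) (B : 'I_m -> {set 'I_n}) (f : 'I_n -> 'rV[R]_3) : Prop :=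
  forall b, \sum_(i in B b) f i = 0.

Definition equil_pres_congr (n m : nat) (B : 'I_m -> {set 'I_n})
    (f : 'I_n -> 'rV[R]_3) (psi : 'I_n -> R) : Prop :=
  (forall i, psi i != 0) /\ (equil B (congr_sys psi f) <-> equil B f).

Definition proj_duality_statics (q : force_type) (n m : nat) (B : 'I_m -> {set 'I_n})
    (f g : 'I_n -> 'rV[R]_3) : Prop :=
  exists2 D : 'M[R]_3, D \in unitmx &
    (forall i, proj_eq (dual_img D (force_kind q) (f i)) (g i)) /\
    (equil B g <-> equil B f).

(* A kinematics problem: n bodies with velocities e, m compatibility conditions;
   condition t reads <c t, e (J t) - e (K t)> = 0, with c t a line (E_c case) or
   a point (E_p case). *)
Definition compat (n m : nat) (c : 'I_m -> 'rV[R]_3) (J K : 'I_m -> 'I_n)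
    (e : 'I_n -> 'rV[R]_3) : Prop :=
  forall t, dot (c t) (e (J t) - e (K t)) = 0.

Definition compat_pres_congr (n m : nat) (c : 'I_m -> 'rV[R]_3) (J K : 'I_m -> 'I_n)
    (e : 'I_n -> 'rV[R]_3) (psi : 'I_n -> R) : Prop :=
  (forall j, psi j != 0) /\ (compat c J K (congr_sys psi e) <-> compat c J K e).

Definition dual_constraints (q : vel_type) (m : nat) (D : 'M[R]_3)
    (c : 'I_m -> 'rV[R]_3) : 'I_m -> 'rV[R]_3 :=
  fun t => dual_img D (opp_kind (vel_kind q)) (c t).

Definition proj_duality_kin (q : vel_type) (n m : nat) (c : 'I_m -> 'rV[R]_3)
    (J K : 'I_m -> 'I_n) (e e' : 'I_n -> 'rV[R]_3) : Prop :=
  exists2 D : 'M[R]_3, D \in unitmx &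
    (forall j, proj_eq (dual_img D (vel_kind q) (e j)) (e' j)) /\
    (compat (dual_constraints q D c) J K e' <-> compat c J K e).

End Defs.

(* A projective duality acts on the vectors of one kind as v |-> vA for an
   invertible A (A = D on points, A = D^-T on lines), and the condition that its
   image be projectively equal to g says exactly that g is a nonzero rescaling
   (a congruence) of the system fA.  Multiplying by an invertible A commutes
   with sums, so it preserves equilibrium; it maps the constraint elements
   contragrediently (c |-> c A^-T), so it preserves the pairings
   <c, e_j - e_k>, i.e. compatibility.  Hence the image of a duality is
   equilibrium (compatible) iff the congruence is equilibrium (compatibility)
   preserving. *)
From HB Require Import structures.
From mathcomp Require Import all_boot all_order all_algebra.
From mathcomp Require Import reals.
From Stdlib Require Import FunctionalExtensionality.
Import Order.TTheory GRing.Theory Num.Theory.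
Local Open Scope ring_scope.

Set Implicit Arguments.
Unset Strict Implicit.

Section DualityMatrices.
Variable R : realType.

Lemma duality_of_lin_unit (A : 'M[R]_3) k :
  A \in unitmx -> duality_of_lin A k \in unitmx.
Proof. by case: k => //= uA; rewrite unitmx_tr unitmx_inv. Qed.

Lemma duality_of_linK k : involutive (@duality_of_lin R ^~ k).
Proof. by case: k => A //=; rewrite trmx_inv trmxK invmxK. Qed.

Lemma dual_imgE (D : 'M[R]_3) k v : dual_img D k v = v *m duality_of_lin D k.
Proof. by case: k. Qed.

Lemma dual_img_opp_kind (A : 'M[R]_3) k v :
  dual_img (duality_of_lin A k) (opp_kind k) v = v *m (invmx A)^T.
Proof. by case: k. Qed.

Lemma dotE (u v : 'rV[R]_3) : dot u v = (u *m v^T) 0 0.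
Proof. by rewrite /dot mxE; apply: eq_bigr => i _; rewrite mxE. Qed.

Lemma dot_mulmx_invT (A : 'M[R]_3) u v :
  A \in unitmx -> dot (u *m (invmx A)^T) (v *m A) = dot u v.
Proof.
move=> uA; rewrite !dotE trmx_mul -mulmxA [(invmx A)^T *m _]mulmxA.
by rewrite -trmx_mul mulmxV // trmx1 mul1mx.
Qed.

Lemma proj_eq_congr_sysP n (F G : 'I_n -> 'rV[R]_3) :
  (forall i, proj_eq (F i) (G i)) <->
  exists2 psi : 'I_n -> R, (forall i, psi i != 0) & G = congr_sys psi F.
Proof.
split=> [FG | [psi psi_neq0 ->] i]; last by exists (psi i).
have [psi psi_neq0 Gpsi] := fin_all_exists2 FG.
by exists psi => //; apply: functional_extensionality.
Qed.

End DualityMatrices.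

Section MechanicalInvariance.
Variables (R : realType) (n m : nat).

Lemma equil_mulmx (B : 'I_m -> {set 'I_n}) (A : 'M[R]_3) f :
  A \in unitmx -> equil B (fun i => f i *m A) <-> equil B f.
Proof.
move=> uA; split=> eqf b; last by rewrite -mulmx_suml eqf mul0mx.
by have := congr1 (mulmx^~ (invmx A)) (eqf b); rewrite /= -mulmx_suml mulmxK // mul0mx.
Qed.

Lemma compat_mulmx q (c : 'I_m -> 'rV[R]_3) (J K : 'I_m -> 'I_n) (A : 'M[R]_3) e :
  A \in unitmx ->
  compat (dual_constraints q (duality_of_lin A (vel_kind q)) c) J K (fun j => e j *m A)
  <-> compat c J K e.
Proof.
move=> uA; suff dotA t : dot (dual_constraints q (duality_of_lin A (vel_kind q)) c t)
    (e (J t) *m A - e (K t) *m A) = dot (c t) (e (J t) - e (K t)).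
  by split=> compat_e t; have := compat_e t; rewrite /= dotA.
by rewrite /dual_constraints dual_img_opp_kind -mulmxBl dot_mulmx_invT.
Qed.

End MechanicalInvariance.

Section DualityClassification.
Variables (R : realType) (n : nat) (k : elt_kind).
(* [valid] is equilibrium (compatibility) of the original problem, and
   [valid_dual D] the same condition in the problem dualised by D; for
   kinematics the latter depends on D through the dualised constraints. *)
Variables (valid : ('I_n -> 'rV[R]_3) -> Prop)
          (valid_dual : 'M[R]_3 -> ('I_n -> 'rV[R]_3) -> Prop).
Hypothesis valid_dual_mulmx : forall A f, A \in unitmx ->
  valid_dual (duality_of_lin A k) (fun i => f i *m A) <-> valid f.

Lemma proj_duality_congrP f g :
  (exists2 D : 'M[R]_3, D \in unitmx &
     (forall i, proj_eq (dual_img D k (f i)) (g i)) /\ (valid_dual D g <-> valid f))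
  <->
  exists2 A : 'M[R]_3, A \in unitmx &
    exists2 psi : 'I_n -> R,
      (forall i, psi i != 0) /\
      (valid_dual (duality_of_lin A k) (congr_sys psi (fun i => f i *m A)) <->
       valid_dual (duality_of_lin A k) (fun i => f i *m A)) &
      g = congr_sys psi (fun i => f i *m A).
Proof.
split=> [[D uD [fDg validg]] | [A uA [psi [psi_neq0 valid_psi] ->]]].
  pose A := duality_of_lin D k; have uA : A \in unitmx by exact: duality_of_lin_unit.
  exists A => //.
  have /proj_eq_congr_sysP[psi psi_neq0 gE] : forall i, proj_eq (f i *m A) (g i).
    by move=> i; rewrite -dual_imgE.
  exists psi => //; split=> //.
  by rewrite -gE duality_of_linK validg -(valid_dual_mulmx f uA) duality_of_linK.
exists (duality_of_lin A k); first exact: duality_of_lin_unit.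
split; last by rewrite valid_psi valid_dual_mulmx.
apply/proj_eq_congr_sysP; exists psi => //; congr congr_sys.
by apply: functional_extensionality => i; rewrite dual_imgE duality_of_linK.
Qed.

End DualityClassification.

Unset Implicit Arguments.

Theorem theorem4 (R : realType) :
  (* (i) statics *)
  (forall (q : force_type) (n m : nat) (B : 'I_m -> {set 'I_n}),
     (forall (A : 'M[R]_3), A \in unitmx ->
        forall f : 'I_n -> 'rV[R]_3, equil B f -> equil B (fun i => f i *m A)) /\
     (forall f g : 'I_n -> 'rV[R]_3,
        proj_duality_statics q B f g <->
        exists2 A : 'M[R]_3, A \in unitmx &
          exists2 psi : 'I_n -> R,
            equil_pres_congr B (fun i => f i *m A) psi &
            g = congr_sys psi (fun i => f i *m A))) /\
  (* (ii) kinematics *)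
  (forall (q : vel_type) (n m : nat) (c : 'I_m -> 'rV[R]_3) (J K : 'I_m -> 'I_n),
     (forall (A : 'M[R]_3), A \in unitmx ->
        forall e : 'I_n -> 'rV[R]_3, compat c J K e ->
          compat (dual_constraints q (duality_of_lin A (vel_kind q)) c) J K
                 (fun j => e j *m A)) /\
     (forall e e' : 'I_n -> 'rV[R]_3,
        proj_duality_kin q c J K e e' <->
        exists2 A : 'M[R]_3, A \in unitmx &
          exists2 psi : 'I_n -> R,
            compat_pres_congr (dual_constraints q (duality_of_lin A (vel_kind q)) c)
                              J K (fun j => e j *m A) psi &
            e' = congr_sys psi (fun j => e j *m A))).
Proof.
split=> [q n m B | q n m c J K]; split.
- by move=> A uA f /(equil_mulmx B f uA).
- apply: (proj_duality_congrP (k := force_kind q) (valid_dual := fun _ => equil B)).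
  exact: equil_mulmx.
- by move=> A uA e /(compat_mulmx q c J K e uA).
- apply: (proj_duality_congrP
    (valid_dual := fun D => compat (dual_constraints q D c) J K)).
  exact: compat_mulmx.
Qed.
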